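(* Let $G$ be a connected graph and let $S \subseteq V(G)$ with $|S| = k \ge 1$. Then there exists a connected induced subgraph $H$ of $G$ with $S \subseteq V(H)$ and a partition $V(H) = A \cup B$ into two disjoint sets such that: (1) every connected component of $G[A]$ and every connected component of $G[B]$ has at most $\lceil k/2 \rceil$ vertices; (2) the spanning subgraph of $H$ with vertex set $V(H)$ whose edges are exactly the edges of $H$ with one endpoint in $A$ and the other in $B$ is connected; (3) every vertex $v \in V(G)\setminus V(H)$ that is adjacent in $G$ to at least one vertex of $V(H)$ has a neighbor $a\in A$ and a neighbor $b \in B$.
   Context: All graphs are finite and simple. $G[X]$ denotes the subgraph of $G$ induced by the vertex set $X$. *)

From mathcomp Require Import all_boot.
Set Implicit Arguments. Unset Strict Implicit. Unset Printing Implicit Defensive.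

Definition simple_graph (T : finType) (e : rel T) : Prop :=
  symmetric e /\ irreflexive e.

Definition induced (T : finType) (e : rel T) (X : {set T}) : rel T :=
  [rel x y | [&& x \in X, y \in X & e x y]].

(* The graph (X, r) is connected: any two vertices of X are joined by an
   r-path (r only relates vertices of X in our uses). *)
Definition connected_on (T : finType) (r : rel T) (X : {set T}) : Prop :=
  forall x y, x \in X -> y \in X -> connect r x y.

Definition graph_connected (T : finType) (e : rel T) : Prop :=
  connected_on e [set: T].

Definition comp_of (T : finType) (e : rel T) (X : {set T}) (x : T) : {set T} :=
  [set y in X | connect (induced e X) x y].

Definition cross (T : finType) (e : rel T) (A B : {set T}) : rel T :=
  [rel x y | e x y && (((x \in A) && (y \in B)) || ((x \in B) && (y \in A)))].

(* Weight every vertex by the indicator of S. By induction on the number of vertices, a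
   connected weighted graph V has a connected induced subgraph H containing every vertex of
   positive weight, with a bipartition (A, H \ A) whose crossing edges form a connected graph
   and whose same-side components have at most half the total weight (rounded up) vertices.
   A weightless vertex that is not a cut vertex is deleted. At a cut vertex x, a component L
   of V - x of at most half the weight is contracted onto x; the contracted graph is solved
   recursively, while x + L is solved with root x, every neighbour of the root being put on
   the other side, so that the two solutions glue along x without merging components and the
   components inside L have at most weight(L) vertices. Without weightless or cut vertices
   every vertex has positive weight, and a cut with connected crossing graph is balanced by
   moving, out of a component larger than half of H, a vertex that does not disconnect the
   crossing graph. Finally H is grown by each outside neighbour seeing only one side: it is
   put on the other side, where it forms a singleton component. *)

From mathcomp Require Import all_boot zify.
Set Implicit Arguments. Unset Strict Implicit. Unset Printing Implicit Defensive.

Section Connect.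
Variables (T : finType) (r : rel T).
Implicit Types (X Y Q : {set T}) (x y : T).

Lemma connect_ind (P : T -> Prop) x :
  P x -> (forall y z, P y -> r y z -> P z) -> forall y, connect r x y -> P y.
Proof.
move=> Px step y /connectP[p pp ->]; elim: p x Px pp => //= z p IH x Px /andP[rxz pp].
exact: IH (step _ _ Px rxz) pp.
Qed.

Lemma connect_exit Q x y : connect r x y -> x \in Q -> y \notin Q ->
  exists q q', [/\ q \in Q, q' \notin Q & r q q'].
Proof.
move=> /connectP[p]; elim: p x => [x _ -> xQ|z p IH x /= /andP[rxz pz] yE xQ yQ].
  by rewrite xQ.
have [zQ|zQ] := boolP (z \in Q); first exact: IH pz yE zQ yQ.
by exists x, z.
Qed.

Definition connectedb X := [forall x in X, forall y in X, connect r x y].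

Lemma connectedP X : reflect (connected_on r X) (connectedb X).
Proof.
apply: (iffP forall_inP) => [h x y xX | h x xX]; first exact/forall_inP/h.
by apply/forall_inP => y; apply: h.
Qed.

Lemma connected_on_from X x : connect_sym r ->
  (forall y, y \in X -> connect r x y) -> connected_on r X.
Proof. by move=> rsym reach y z yX zX; apply: connect_trans (reach z zX); rewrite rsym reach. Qed.

End Connect.

Section Induced.
Variables (T : finType) (r : rel T).
Implicit Types (X Y : {set T}) (x y : T).

Lemma induced_connect_in X x y : x \in X -> connect (induced r X) x y -> y \in X.
Proof. by move=> xX; apply: (connect_ind (P := fun z => z \in X)) xX _ y => u v _ /and3P[]. Qed.

Lemma connect_induced_closed Y x y :
  (forall u v, u \in Y -> r u v -> v \in Y) -> x \in Y -> connect r x y ->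
  y \in Y /\ connect (induced r Y) x y.
Proof.
move=> closedY xY.
apply: (connect_ind (P := fun z => z \in Y /\ connect (induced r Y) x z)) (conj xY (connect0 _ x)) _ y.
move=> u v [uY cxu] ruv.
have vY := closedY _ _ uY ruv; split=> //.
by apply: connect_trans cxu (connect1 _); rewrite /induced /= uY vY.
Qed.

End Induced.

Lemma connect_induced_sub (T : finType) (r r' : rel T) (X Y : {set T}) :
  X \subset Y -> subrel r r' -> subrel (connect (induced r X)) (connect (induced r' Y)).
Proof.
move=> /subsetP sXY srr; apply: connect_sub => x y /and3P[xX yX rxy]; apply: connect1.
by rewrite /induced /= (sXY x xX) (sXY y yX) (srr _ _ rxy).
Qed.

Section Bipartitions.
Variables (T : finType) (e : rel T).
Hypothesis esym : symmetric e.
Implicit Types (H U V A B C X Y : {set T}) (x y z : T).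

Lemma induced_sym X : symmetric (induced e X).
Proof. by move=> x y; rewrite /induced /= esym andbCA. Qed.

Lemma connect_induced_sym X : connect_sym (induced e X).
Proof. exact/sym_connect_sym/induced_sym. Qed.

Lemma crossC A B : cross e A B =2 cross e B A.
Proof. by move=> x y; rewrite /cross /= orbC. Qed.

Lemma cross_sym A B : symmetric (cross e A B).
Proof. by move=> x y; rewrite /cross /= esym orbC; congr (_ && (_ || _)); apply: andbC. Qed.

Lemma connect_cross_sym A B : connect_sym (cross e A B).
Proof. exact/sym_connect_sym/cross_sym. Qed.

Lemma crossE V A x y : x \in V -> y \in V ->
  cross e A (V :\: A) x y = e x y && ((x \in A) != (y \in A)).
Proof.
move=> xV yV; rewrite /cross /= !inE xV yV.
by case: (x \in A); case: (y \in A); rewrite ?andbT ?andbF.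
Qed.

Lemma cross_in V A x y : A \subset V -> cross e A (V :\: A) x y -> (x \in V) && (y \in V).
Proof.
move=> sAV /andP[_ h]; have inV w : (w \in A) || (w \in V :\: A) -> w \in V.
  by case/orP=> [/(subsetP sAV)|/setDP[]].
by case/orP: h => /andP[xs ys]; rewrite !inV ?xs ?ys ?orbT.
Qed.

Definition cross_connected H A := connected_on (cross e A (H :\: A)) H.

Lemma setDDK H A : A \subset H -> H :\: (H :\: A) = A.
Proof. by move=> sAH; rewrite setDDr setDv set0U (setIidPr sAH). Qed.

Lemma cross_connected_setD H A : A \subset H -> cross_connected H A -> cross_connected H (H :\: A).
Proof.
move=> sAH cA x y xH yH; rewrite /cross_connected setDDK //.
by rewrite (eq_connect (crossC _ _)); apply: cA.
Qed.

Lemma comp_of_sub X x : comp_of e X x \subset X.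
Proof. by apply/subsetP => y; rewrite inE => /andP[]. Qed.

Lemma comp_of_id X x : x \in X -> x \in comp_of e X x.
Proof. by move=> xX; rewrite inE xX connect0. Qed.

Lemma comp_ofS X Y x : X \subset Y -> comp_of e X x \subset comp_of e Y x.
Proof.
move=> sXY; apply/subsetP => y; rewrite !inE => /andP[yX cxy].
by rewrite (subsetP sXY _ yX) (connect_induced_sub sXY _ cxy).
Qed.

Lemma comp_of_trans X x y : y \in comp_of e X x -> comp_of e X x \subset comp_of e X y.
Proof.
rewrite inE => /andP[_ cxy]; apply/subsetP => z; rewrite !inE => /andP[-> /=].
by apply: connect_trans; rewrite connect_induced_sym.
Qed.

Lemma comp_of_closed X X' Y z :
  z \in Y -> (forall u v, u \in Y -> u \in X -> v \in X -> e u v -> v \in Y) ->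
  {in Y, forall w, w \in X -> w \in X'} -> comp_of e X z \subset comp_of e X' z.
Proof.
move=> zY closedY sub; apply/subsetP => y; rewrite !inE => /andP[yX czy].
have [|yY cYzy] := connect_induced_closed _ zY czy.
  by move=> u v uY /and3P[uX vX euv]; apply: closedY uY uX vX euv.
rewrite (sub _ yY yX); apply: connect_sub cYzy => u v /and3P[uY vY /and3P[uX vX euv]].
by apply: connect1; rewrite /induced /= (sub _ uY uX) (sub _ vY vX).
Qed.

Definition side H A z := if z \in A then A else H :\: A.

Definition side_comp H A z := comp_of e (side H A z) z.

Lemma side_sub H A z : A \subset H -> side H A z \subset H.
Proof. by move=> sAH; rewrite /side; case: ifP => // _; apply: subsetDl. Qed.

Lemma side_in H A z u v : A \subset H ->
  u \in side H A z -> v \in side H A z -> (u \in A) = (v \in A).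
Proof.
move=> sAH; rewrite /side; case: (z \in A) => [-> -> //|]; rewrite !inE.
by move=> /andP[/negbTE -> _] /andP[/negbTE -> _].
Qed.

Lemma side_setD H A z : A \subset H -> z \in H -> side H (H :\: A) z = side H A z.
Proof. by move=> sAH zH; rewrite /side setDDK // !inE zH andbT; case: (z \in A). Qed.

End Bipartitions.

Section AlternatingBipartition.
Variables (T : finType) (e : rel T).
Hypotheses (esym : symmetric e) (eirr : irreflexive e).
Implicit Types (V A : {set T}) (r x y : T).

Definition alternates_at V A r := {in V, forall y, e r y -> (y \in A) != (r \in A)}.

Definition mono_edges V A :=
  [set p : T * T | [&& p.1 \in V, p.2 \in V, e p.1 p.2 & (p.1 \in A) == (p.2 \in A)]].

(* Flipping every vertex that r cannot reach through crossing edges turns the monochromatic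
   edges leaving r's crossing component into crossing ones, and changes no other edge. *)
Lemma flip_unreachable V A r :
  connected_on (induced e V) V -> r \in V -> A \subset V -> alternates_at V A r ->
  ~ cross_connected e V A ->
  exists A', [/\ A' \subset V, alternates_at V A' r & mono_edges V A' \proper mono_edges V A].
Proof.
move=> cV rV sAV alt ncA.
set X := cross e A (V :\: A); pose Q := [set y | connect X r y].
have rQ : r \in Q by rewrite inE connect0.
have closedQ x y : X x y -> (x \in Q) = (y \in Q).
  move=> Xxy; rewrite !inE; apply/idP/idP => [crx|cry].
    exact: connect_trans crx (connect1 Xxy).
  by apply: connect_trans cry (connect1 _); rewrite /X (cross_sym esym).
have monoQ x y : x \in V -> y \in V -> e x y -> (x \in Q) != (y \in Q) -> (x \in A) == (y \in A).
  by move=> xV yV exy; apply: contraR => nA; rewrite (closedQ x y) // /X crossE // exy.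
have /exists_inP[y0 y0V y0Q] : [exists y0 in V, y0 \notin Q].
  apply: contraNT (introN (connectedP _ _) ncA) => /exists_inPn reach.
  apply/connectedP/(connected_on_from (x := r) (connect_cross_sym esym _ _)) => y yV.
  by have := reach y yV; rewrite negbK inE.
pose A' := [set y in V | (y \in A) == (y \in Q)].
have sA'V : A' \subset V by apply/subsetP => y; rewrite inE => /andP[].
have memA' y : y \in V -> (y \in A') = ((y \in A) == (y \in Q)) by rewrite inE => ->.
clearbody A'; exists A'; split=> //.
- move=> y yV ery; have yQ : y \in Q.
    by rewrite -(closedQ r) // /X crossE // ery eq_sym alt.
  by rewrite !memA' // rQ yQ !eqb_id alt.
apply/properP; split.
  apply/subsetP => -[x y]; rewrite !inE /= => /and4P[xV yV exy].
  rewrite xV yV exy !memA' //=.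
  have : ((x \in Q) != (y \in Q)) ==> ((x \in A) == (y \in A)) by apply/implyP/monoQ.
  by case: (x \in A); case: (y \in A); case: (x \in Q); case: (y \in Q).
have [q [q' [qQ q'Q /and3P[qV q'V eqq']]]] := connect_exit (cV _ _ rV y0V) rQ y0Q.
have /eqP qA : (q \in A) == (q' \in A) by rewrite monoQ // qQ (negbTE q'Q).
exists (q, q'); rewrite !inE /= qV q'V eqq' /=; first exact/eqP.
by rewrite !memA' // qQ (negbTE q'Q) qA; case: (q' \in A).
Qed.

Lemma exists_alternating_cross_connected V r :
  connected_on (induced e V) V -> r \in V ->
  exists A, [/\ A \subset V, cross_connected e V A & alternates_at V A r].
Proof.
move=> cV rV.
suff: forall A, A \subset V -> alternates_at V A r ->
    exists A, [/\ A \subset V, cross_connected e V A & alternates_at V A r].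
  move/(_ [set r]); apply; first by rewrite sub1set.
  move=> y _ ery; rewrite !inE eqxx; apply: contraTN ery => /eqP/eqP ->.
  by rewrite eirr.
move=> A; have [n] := ubnP #|mono_edges V A|; elim: n A => // n IH A /ltnSE ltn sAV alt.
have [cA|ncA] := boolP (connectedb (cross e A (V :\: A)) V).
  by exists A; split=> //; apply/connectedP.
have [A' [sA'V alt' ltA']] := flip_unreachable cV rV sAV alt (elimN (connectedP _ _) ncA).
exact: IH A' (leq_trans (proper_card ltA') ltn) sA'V alt'.
Qed.

Lemma alternates_at_side_comp V A r z : A \subset V -> alternates_at V A r -> z != r ->
  r \notin side_comp e V A z.
Proof.
move=> sAV alt zr; apply/negP; rewrite inE => /andP[rS czr].
have crz : connect (induced e (side V A z)) r z by rewrite connect_induced_sym.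
have zn : z \notin [set r] by rewrite inE.
have [q [q' [/set1P -> _ /and3P[_ q'S erq']]]] := connect_exit crz (set11 r) zn.
by move: (alt q' (subsetP (side_sub z sAV) q' q'S) erq'); rewrite (side_in sAV rS q'S) eqxx.
Qed.

End AlternatingBipartition.

Section NonCutVertex.
Variables (T : finType) (r : rel T) (U : {set T}).
Hypotheses (rsym : symmetric r) (rirr : irreflexive r).
Hypotheses (closedU : forall x y, x \in U -> r x y -> y \in U) (cU : connected_on r U).
Implicit Types (C D : {set T}) (a b : T).

Lemma cut_neighbor a u0 b0 : u0 \in U :\ a -> b0 \in U :\ a ->
  ~~ connect (induced r (U :\ a)) u0 b0 ->
  exists2 b, r a b & ~~ connect (induced r (U :\ a)) u0 b.
Proof.
move=> u0Ua b0Ua nreach; set R := induced r (U :\ a).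
have Rsym : connect_sym R := sym_connect_sym (induced_sym rsym _).
pose Q := [set y | connect R b0 y].
have b0Q : b0 \in Q by rewrite inE connect0.
have u0Q : u0 \notin Q by rewrite inE Rsym.
have [q [q' [qQ q'Q rqq']]] := connect_exit (cU (setD1P b0Ua).2 (setD1P u0Ua).2) b0Q u0Q.
have qUa : q \in U :\ a by move: qQ; rewrite inE; apply: induced_connect_in.
have [q'a|q'a] := eqVneq q' a.
  exists q; first by rewrite rsym -q'a.
  apply: contra nreach => cu0q; apply: connect_trans cu0q _.
  by rewrite Rsym; move: qQ; rewrite inE.
move: q'Q; rewrite inE; move: qQ; rewrite inE => cb0q.
rewrite (connect_trans cb0q) // connect1 // /R /induced /= qUa rqq' !inE q'a andbT.
exact: closedU (setD1P qUa).2 rqq'.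
Qed.

Lemma separated_common_neighbor a a' b u0 : a \in U -> a' \in U -> u0 \in U -> u0 != a -> u0 != a' ->
  r a b -> r a' b -> ~~ connect (induced r (U :\ a)) u0 b ->
  ~~ connect (induced r (U :\ a')) u0 b -> a = a'.
Proof.
move=> aU a'U u0U u0a u0a' rab ra'b nab na'b; apply/eqP/negP => /negP aa'.
have bU : b \in U := closedU aU rab.
have edge_to_b x c : x \in U -> x != c -> b != c -> r x b ->
    ~~ connect (induced r (U :\ c)) u0 b -> ~~ connect (induced r (U :\ c)) u0 x.
  move=> xU xc bc rxb; apply: contra => cu0x; apply: connect_trans cu0x (connect1 _).
  by rewrite /induced /= !inE xc xU bc bU rxb.
have ba : b != a by apply: contraTneq rab => ->; rewrite rirr.
have ba' : b != a' by apply: contraTneq ra'b => ->; rewrite rirr.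
have na'a : ~~ connect (induced r (U :\ a)) u0 a' by apply: edge_to_b; rewrite // eq_sym.
have naa' : ~~ connect (induced r (U :\ a')) u0 a by apply: edge_to_b.
pose W := U :\: [set a; a'].
have inW z : z \in U -> z != a -> z != a' -> z \in W by rewrite !inE negb_or => -> -> ->.
have u0W : u0 \in W := inW _ u0U u0a u0a'.
pose Q := [set y | connect (induced r W) u0 y].
have u0Q : u0 \in Q by rewrite inE connect0.
have aQ : a \notin Q.
  by rewrite inE; apply/negP => /(induced_connect_in u0W); rewrite !inE eqxx.
have [q [q' [qQ q'Q rqq']]] := connect_exit (cU u0U aU) u0Q aQ.
have cu0q : connect (induced r W) u0 q by move: qQ; rewrite inE.
have qW : q \in W := induced_connect_in u0W cu0q.
have q'U : q' \in U := closedU (setDP qW).1 rqq'.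
have via_q c : c \in [set a; a'] -> q' != c -> connect (induced r (U :\ c)) u0 q'.
  move=> cW q'c; have sWUc : W \subset U :\ c.
    apply/subsetP => z; rewrite !inE negb_or => /andP[/andP[za za'] ->].
    by case/set2P: cW => ->; rewrite ?za ?za'.
  have qUc : q \in U :\ c := subsetP sWUc q qW.
  apply: connect_trans (connect_induced_sub sWUc (fun _ _ h => h) cu0q) (connect1 _).
  by rewrite /induced /= qUc !inE q'c q'U rqq'.
have [q'a|q'na] := eqVneq q' a.
  by move: naa'; rewrite -q'a (via_q a') ?q'a ?inE ?eqxx ?orbT.
have [q'a'|q'na'] := eqVneq q' a'.
  by move: na'a; rewrite -q'a' (via_q a) ?q'a' ?inE ?eqxx // eq_sym.
move: q'Q; rewrite inE => /negP; apply.
by apply: connect_trans cu0q (connect1 _); rewrite /induced /= qW rqq' inW.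
Qed.

(* If each vertex of C had a neighbour in D separated from u0 by it, these neighbours
   would form an injective map from C into D minus u0. *)
Lemma exists_noncut C D u0 : C \subset U -> u0 \in U :\: C -> u0 \in D -> #|D| <= #|C| ->
  (forall a b, a \in C -> r a b -> b \in D) ->
  exists2 a, a \in C & forall b, b \in U :\ a -> connect (induced r (U :\ a)) u0 b.
Proof.
move=> sCU /setDP[u0U u0C] u0D card_DC CD.
suff /exists_inP[a aC /forall_inP reach] :
    [exists a in C, [forall b in U :\ a, connect (induced r (U :\ a)) u0 b]] by exists a.
apply: contraTT card_DC => /exists_inPn allcut; rewrite -ltnNge.
have cutP a : exists b, a \in C -> r a b && ~~ connect (induced r (U :\ a)) u0 b.
  have [aC|] := boolP (a \in C); last by exists a.
  have /forall_inPn[b0 b0Ua nb0] := allcut a aC.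
  have u0Ua : u0 \in U :\ a by rewrite !inE u0U andbT; apply: contraNneq u0C => ->.
  by have [b rab nb] := cut_neighbor u0Ua b0Ua nb0; exists b => _; rewrite rab.
have [g gP] := fin_all_exists cutP.
have gD : {in C, forall a, g a \in D :\ u0}.
  move=> a aC; have /andP[rag nag] := gP a aC; rewrite !inE (CD a _ aC rag) andbT.
  by apply: contraNneq nag => ->; apply: connect0.
have ginj : {in C &, injective g}.
  move=> a a' aC a'C ga; have /andP[rag nag] := gP a aC; have /andP[ra'g na'g] := gP a' a'C.
  have sCU' := subsetP sCU; rewrite -ga in ra'g na'g.
  have u0a z : z \in C -> u0 != z by move=> zC; apply: contraNneq u0C => ->.
  exact: separated_common_neighbor (sCU' _ aC) (sCU' _ a'C) u0U (u0a _ aC) (u0a _ a'C)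
    rag ra'g nag na'g.
rewrite -(card_in_imset ginj) (cardsD1 u0 D) u0D add1n ltnS.
by apply: subset_leq_card; apply/subsetP => _ /imsetP[a aC ->]; apply: gD.
Qed.

End NonCutVertex.

Section Balancing.
Variables (T : finType) (e : rel T).
Hypotheses (esym : symmetric e) (eirr : irreflexive e).
Implicit Types (U A : {set T}) (a z : T).

(* Components are weighted exponentially in their size, so splitting a component of size c
   into pieces of size < c decreases the potential even if every vertex is affected. *)
Definition potential U A := \sum_(z in U) #|T|.+1 ^ #|side_comp e U A z|.

Lemma potential_setD U A : A \subset U -> potential U (U :\: A) = potential U A.
Proof. by move=> sAU; apply: eq_bigr => z zU; rewrite /side_comp side_setD. Qed.

Lemma potential_move_lt U A a : A \subset U -> a \in A ->
  #|U :\: A| + 2 <= #|side_comp e U A a| -> potential U (A :\ a) < potential U A.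
Proof.
move=> sAU aA big; set c := #|side_comp e U A a| in big; pose N := #|T|.+1.
have aU : a \in U := subsetP sAU a aA.
have cardB : #|U :\: (A :\ a)| = #|U :\: A| + 1.
  rewrite setDDr (setIidPr _) ?sub1set // setUC cardsU1 addnC.
  by rewrite !inE aA.
rewrite /potential (big_setID (A :\ a)) [X in _ < X](big_setID (A :\ a)) /= -addnS.
apply: leq_add.
  apply: leq_sum => z /setIP[_ zA']; have zA : z \in A by case/setD1P: zA'.
  rewrite /side_comp /side zA' zA leq_pexp2l //; apply/subset_leq_card/comp_ofS.
  exact: subsetDl.
apply: (@leq_ltn_trans (#|U :\: (A :\ a)| * N ^ c.-1)).
  rewrite -sum_nat_const; apply: leq_sum => z /setDP[_ /negbTE zA'].
  rewrite /side_comp /side zA' leq_pexp2l //.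
  by apply: leq_trans (subset_leq_card (comp_of_sub _ _ _)) _; rewrite cardB; lia.
apply: (@leq_trans (N ^ c)).
  rewrite -[in X in _ < X](prednK (_ : 0 < c)); last by lia.
  by rewrite expnS ltn_mul2r expn_gt0 /= ltnS max_card.
by rewrite (bigD1 a) ?leq_addr // !inE eqxx aU.
Qed.

Lemma cross_connected_move U A a c u0 : A \subset U -> a \in A -> c \in A :\ a -> e a c ->
  u0 \in U :\ a -> {in U :\ a, forall b, connect (induced (cross e A (U :\: A)) (U :\ a)) u0 b} ->
  cross_connected e U (A :\ a).
Proof.
move=> sAU aA cA' eac u0Ua reach.
have aU := subsetP sAU a aA.
have cU : c \in U by case/setD1P: cA' => _ /(subsetP sAU).
have sub : subrel (induced (cross e A (U :\: A)) (U :\ a))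
                  (connect (cross e (A :\ a) (U :\: (A :\ a)))).
  move=> x y /and3P[/setD1P[xa xU] /setD1P[ya yU]].
  by rewrite !crossE // => Xxy; apply: connect1; rewrite crossE // !inE xa ya.
apply: (connected_on_from (x := u0) (connect_cross_sym esym _ _)) => z zU.
have [->|za] := eqVneq z a; last by apply: connect_sub sub _ _ (reach _ _); rewrite !inE za.
apply: connect_trans (connect_sub sub (reach c _)) (connect1 _).
  by rewrite !inE cU andbT; case/setD1P: cA'.
by rewrite crossE // esym eac cA' !inE eqxx.
Qed.

Lemma exists_other (X : {set T}) x : 1 < #|X| -> exists2 y, y \in X & y != x.
Proof.
move/card_gt1P=> [y [y' [yX y'X yy']]].
have [yx|yx] := eqVneq y x; last by exists y.
by exists y'; rewrite // -yx eq_sym.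
Qed.

(* The big component C of A outweighs the other side B, so it contains a vertex a that is
   not a cut vertex of the crossing graph; moving a to B keeps the crossing graph connected,
   and all components containing a or meeting C then have fewer than #|C| vertices. *)
Lemma balance_step U A a0 : A \subset U -> cross_connected e U A -> a0 \in A ->
  uphalf #|U| < #|side_comp e U A a0| ->
  exists A', [/\ A' \subset U, cross_connected e U A' & potential U A' < potential U A].
Proof.
move=> sAU cA a0A big; rewrite /side_comp /side a0A in big.
set C := comp_of e A a0 in big; set X := cross e A (U :\: A).
have sCA : C \subset A := comp_of_sub _ _ _.
have cardU := cardsID A U; rewrite (setIidPr sAU) in cardU.
have bigC : #|U :\: A| + 2 <= #|C| by have := subset_leq_card sCA; lia.
have C2 : 1 < #|C| by lia.
have [a1 a1C a1a0] := exists_other a0 C2.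
have [u0 u0B] : exists u0, u0 \in U :\: A.
  have a1U := subsetP sAU a1 (subsetP sCA a1 a1C).
  have a1n : a1 \notin [set a0] by rewrite inE.
  have [q [q' [/set1P -> q'a0 Xa0q']]] := connect_exit (cA a0 a1 (subsetP sAU a0 a0A) a1U) (set11 a0) a1n.
  exists q'; have /andP[_ q'U] := cross_in sAU Xa0q'.
  move: Xa0q'; rewrite /X crossE ?(subsetP sAU a0 a0A) // a0A => /andP[_ q'A].
  by rewrite !inE q'U andbT; case: (q' \in A) q'A.
have Xirr : irreflexive X by move=> x; rewrite /X /cross /= eirr.
have closedX x y : x \in U -> X x y -> y \in U by move=> _ /(cross_in sAU)/andP[].
have u0C : u0 \in U :\: C.
  by case/setDP: u0B => u0U u0A; rewrite inE u0U andbT; apply: contra u0A; apply: (subsetP sCA).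
have XC a b : a \in C -> X a b -> b \in U :\: A.
  by move=> /(subsetP sCA) aA /andP[_ /orP[] /andP[] //]; rewrite inE aA.
have [|a aC reach] := exists_noncut (cross_sym esym _ _) Xirr closedX cA (subset_trans sCA sAU)
  u0C u0B (_ : #|U :\: A| <= #|C|) XC; first by lia.
have aA := subsetP sCA a aC.
have [c cA' eac] : exists2 c, c \in A :\ a & e a c.
  have [c0 c0C c0a] := exists_other a C2.
  have /setIdP[_ cac0] := subsetP (comp_of_trans esym aC) c0 c0C.
  have c0n : c0 \notin [set a] by rewrite inE.
  have [q [q' [/set1P -> q'a /and3P[_ q'A eaq']]]] := connect_exit cac0 (set11 a) c0n.
  by exists q'; rewrite // !inE q'A andbT; move: q'a; rewrite inE.
exists (A :\ a); split.
- exact: subset_trans (subsetDl _ _) sAU.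
- apply: (cross_connected_move sAU aA cA' eac _ reach).
  by case/setDP: u0B => u0U u0A; rewrite !inE u0U andbT; apply: contraNneq u0A => ->.
apply: potential_move_lt => //; apply: leq_trans bigC _; apply/subset_leq_card.
by rewrite /side_comp /side aA; apply: comp_of_trans.
Qed.

Lemma exists_balanced_cross_connected U r : connected_on (induced e U) U -> r \in U ->
  exists A, [/\ A \subset U, cross_connected e U A &
    {in U, forall z, #|side_comp e U A z| <= uphalf #|U|}].
Proof.
move=> cU rU; have [A0 [sA0U cA0 _]] := exists_alternating_cross_connected esym eirr cU rU.
suff: forall A, A \subset U -> cross_connected e U A -> exists A, [/\ A \subset U,
    cross_connected e U A & {in U, forall z, #|side_comp e U A z| <= uphalf #|U|}].
  by move/(_ A0); apply.
move=> A; have [n] := ubnP (potential U A); elim: n A => // n IH A /ltnSE ltn sAU cA.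
have [bal|] := boolP [forall z in U, #|side_comp e U A z| <= uphalf #|U|].
  by exists A; split=> // z zU; apply: (forall_inP bal).
case/forall_inPn=> z zU; rewrite -ltnNge => big.
have [A' [sA'U cA' lt]] : exists A', [/\ A' \subset U, cross_connected e U A' &
    potential U A' < potential U A].
  have [zA|zA] := boolP (z \in A); first exact: balance_step sAU cA zA big.
  have zB : z \in U :\: A by rewrite inE zA.
  have bigB : uphalf #|U| < #|side_comp e U (U :\: A) z| by rewrite /side_comp side_setD.
  rewrite -potential_setD //.
  exact: balance_step (subsetDl _ _) (cross_connected_setD sAU cA) zB bigB.
exact: IH A' (leq_trans lt ltn) sA'U cA'.
Qed.

End Balancing.

Section Gluing.
Variables (T : finType) (e : rel T) (H1 A1 H2 A2 : {set T}) (x : T).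
Hypotheses (esym : symmetric e) (sA1 : A1 \subset H1) (sA2 : A2 \subset H2).
Hypotheses (xH1 : x \in H1) (xH2 : x \in H2).
Hypothesis meet : forall z, z \in H1 -> z \in H2 -> z = x.
Hypothesis no_edge : forall u v, u \in H1 -> v \in H2 -> u != x -> v != x -> ~~ e u v.
Hypothesis agree : (x \in A1) = (x \in A2).
Hypothesis alt2 : alternates_at e H2 A2 x.

Local Notation H := (H1 :|: H2).
Local Notation A := (A1 :|: A2).

Lemma glue_mem1 z : z \in H1 -> (z \in A) = (z \in A1).
Proof.
move=> zH1; rewrite inE; case zA2: (z \in A2); last by rewrite orbF.
by have zx := meet zH1 (subsetP sA2 _ zA2); move: zA2; rewrite zx -agree => ->.
Qed.

Lemma glue_mem2 z : z \in H2 -> (z \in A) = (z \in A2).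
Proof.
move=> zH2; rewrite inE; case zA1: (z \in A1) => //=.
by have zx := meet (subsetP sA1 _ zA1) zH2; move: zA1; rewrite zx agree => ->.
Qed.

Lemma glue_sub : A \subset H.
Proof. exact: setUSS. Qed.

Lemma glue_connected : connected_on (induced e H1) H1 -> connected_on (induced e H2) H2 ->
  connected_on (induced e H) H.
Proof.
move=> c1 c2; apply: (connected_on_from (x := x) (connect_induced_sym esym _)) => y.
case/setUP=> [yH1|yH2]; first exact: (connect_induced_sub (subsetUl H1 H2) (fun _ _ h => h) (c1 _ _ xH1 yH1)).
exact: (connect_induced_sub (subsetUr H1 H2) (fun _ _ h => h) (c2 _ _ xH2 yH2)).
Qed.

Lemma glue_cross_connected : cross_connected e H1 A1 -> cross_connected e H2 A2 ->
  cross_connected e H A.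
Proof.
have cross_sub (Hi Ai : {set T}) : Hi \subset H -> Ai \subset Hi -> {in Hi, forall z, (z \in A) = (z \in Ai)} ->
    subrel (cross e Ai (Hi :\: Ai)) (connect (cross e A (H :\: A))).
  move=> sHi sAi memi u v cuv; have /andP[uHi vHi] := cross_in sAi cuv; apply: connect1.
  by move: cuv; rewrite !crossE ?(subsetP sHi) // (memi u) // (memi v).
move=> c1 c2; apply: (connected_on_from (x := x) (connect_cross_sym esym _ _)) => y.
case/setUP=> [yH1|yH2].
  exact: (connect_sub (cross_sub _ _ (subsetUl H1 H2) sA1 glue_mem1) (c1 _ _ xH1 yH1)).
exact: (connect_sub (cross_sub _ _ (subsetUr H1 H2) sA2 glue_mem2) (c2 _ _ xH2 yH2)).
Qed.

Lemma glue_side_comp1 z : z \in H1 -> side_comp e H A z \subset side_comp e H1 A1 z.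
Proof.
move=> zH1; apply: (comp_of_closed zH1) => [u v uH1 uS vS euv|w wH1].
  have /setUP[//|vH2] := subsetP (side_sub z glue_sub) v vS.
  have [vx|vx] := eqVneq v x; first by rewrite vx.
  have [ux|ux] := eqVneq u x; last by move: (no_edge uH1 vH2 ux vx); rewrite euv.
  subst u; have := side_in glue_sub uS vS; rewrite (glue_mem1 xH1) (glue_mem2 vH2) agree.
  by move=> same; move: (alt2 vH2 euv); rewrite same eqxx.
rewrite /side (glue_mem1 zH1); case: ifP => _; first by rewrite (glue_mem1 wH1).
by rewrite !in_setD (glue_mem1 wH1) wH1 => /andP[->].
Qed.

Lemma glue_side_comp2 z : z \in H2 -> z != x -> side_comp e H A z \subset side_comp e H2 A2 z.
Proof.
move=> zH2 zx; apply: (@comp_of_closed _ _ _ _ (H2 :\ x)) => [|u v|w].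
- by rewrite !inE zx.
- case/setD1P=> ux uH2 uS vS euv; have := subsetP (side_sub z glue_sub) v vS.
  have not_x : v != x.
    apply: contraTneq euv => vx; subst v; have := side_in glue_sub uS vS.
    rewrite (glue_mem2 uH2) (glue_mem2 xH2) => same; apply/negP => exu.
    by move: (alt2 uH2); rewrite esym exu same eqxx => /(_ isT).
  case/setUP=> [vH1|vH2]; last by rewrite !inE vH2 not_x.
  by move: (no_edge vH1 uH2 not_x ux); rewrite esym euv.
case/setD1P=> _ wH2; rewrite /side (glue_mem2 zH2); case: ifP => _.
  by rewrite (glue_mem2 wH2).
by rewrite !in_setD (glue_mem2 wH2) wH2 => /andP[->].
Qed.

End Gluing.

Section CutVertex.
Variables (T : finType) (e : rel T).
Hypothesis esym : symmetric e.
Implicit Types (U V H A L : {set T}) (x z : T).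

Definition connected_split H A :=
  [/\ A \subset H, connected_on (induced e H) H & cross_connected e H A].

Lemma connected_split_setD H A : connected_split H A -> connected_split H (H :\: A).
Proof. by case=> sAH cH cA; split=> //; [apply: subsetDl | apply: cross_connected_setD]. Qed.

Lemma alternates_at_setD H A x : x \in H -> alternates_at e H A x -> alternates_at e H (H :\: A) x.
Proof.
move=> xH alt y yH exy; rewrite !inE xH yH !andbT.
by case: (y \in A) (alt y yH exy); case: (x \in A).
Qed.

Lemma comp_of_setD1_adj U x z u l : u \in U -> u != x ->
  l \in comp_of e (U :\ x) z -> e u l -> u \in comp_of e (U :\ x) z.
Proof.
move=> uU ux; rewrite !inE => /andP[/andP[lx lU] czl] eul.
rewrite ux uU /=; apply: connect_trans czl (connect1 _).
by rewrite /induced /= !inE lx lU ux uU esym.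
Qed.

Section Component.
Variables (U : {set T}) (x z : T).
Hypotheses (cU : connected_on (induced e U) U) (xU : x \in U) (zUx : z \in U :\ x).
Let L := comp_of e (U :\ x) z.

Lemma comp_of_setD1_sub : L \subset U :\ x.
Proof. exact: comp_of_sub. Qed.

Let xL : x \notin L.
Proof. by apply/negP => /(subsetP comp_of_setD1_sub); rewrite !inE eqxx. Qed.

Let outside_adj u l : u \in U -> u \notin L -> l \in L -> e l u -> u = x.
Proof.
move=> uU uL lL elu; apply/eqP; apply: contraNT uL => ux.
by apply: comp_of_setD1_adj uU ux lL _; rewrite esym.
Qed.

Lemma connected_setD_comp : connected_on (induced e (U :\: L)) (U :\: L).
Proof.
apply: (connected_on_from (x := x) (connect_induced_sym esym _)) => a /setDP[aU aL].
suff : a \in L \/ connect (induced e (U :\: L)) x a by case=> // /(negP aL).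
apply: (connect_ind (P := fun y => y \in L \/ connect (induced e (U :\: L)) x y)
  (or_intror (connect0 _ x)) _ (cU xU aU)) => y y' [yL|cy] /and3P[yU y'U eyy'].
  have [y'L|y'L] := boolP (y' \in L); first by left.
  by right; rewrite (outside_adj y'U y'L yL eyy').
have [y'L|y'L] := boolP (y' \in L); first by left.
have yUL : y \in U :\: L by apply: induced_connect_in cy; rewrite inE xL.
by right; apply: connect_trans cy (connect1 _); rewrite /induced /= yUL inE y'L y'U eyy'.
Qed.

Lemma connected_setU1_comp : connected_on (induced e (x |: L)) (x |: L).
Proof.
have zU : z \in U by case/setD1P: zUx.
have zL : z \in L by apply: comp_of_id.
have [q [q' [qL q'L /and3P[qU q'U eqq']]]] := connect_exit (cU zU xU) zL xL.
have q'x := outside_adj q'U q'L qL eqq'; subst q'.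
have from_z l : l \in L -> connect (induced e (x |: L)) z l.
  move=> lL; have /setIdP[_ czl] := lL.
  have [|_ cLzl] := connect_induced_closed _ zL czl.
    move=> u v uL /and3P[_ /setD1P[vx vU] euv].
    by apply: comp_of_setD1_adj vU vx uL _; rewrite esym.
  apply: connect_sub cLzl => u v /and3P[uL vL /and3P[_ _ euv]].
  by apply: connect1; rewrite /induced /= !in_setU1 uL vL euv !orbT.
apply: (connected_on_from (x := x) (connect_induced_sym esym _)) => a.
rewrite in_setU1 => /orP[/eqP->|aL]; first exact: connect0.
apply: (@connect_trans _ _ q).
  by apply: connect1; rewrite /induced /= !in_setU1 eqxx qL orbT esym eqq'.
by apply: connect_trans (from_z _ aL); rewrite (connect_induced_sym esym) from_z.
Qed.

End Component.

End CutVertex.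

Section WeightedSplits.
Variables (T : finType) (e : rel T).
Hypotheses (esym : symmetric e) (eirr : irreflexive e).
Implicit Types (V D H A L : {set T}) (w : T -> nat) (r x z : T).

Lemma leq_sum_subset w (A B : {set T}) :
  A \subset B -> \sum_(y in A) w y <= \sum_(y in B) w y.
Proof. by move=> sAB; rewrite [X in _ <= X](big_setID A) (setIidPr sAB) leq_addr. Qed.

Lemma card_lt_witness (A B : {set T}) y : A \subset B -> y \in B -> y \notin A -> #|A| < #|B|.
Proof. by move=> sAB yB yA; apply/proper_card/properP; split=> //; exists y. Qed.

Definition contract_weight w L x y := w y + (y == x) * \sum_(t in L) w t.

Lemma sum_contract_weight w V L x : L \subset V -> x \in V :\: L ->
  \sum_(y in V :\: L) contract_weight w L x y = \sum_(y in V) w y.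
Proof.
move=> sLV xVL; rewrite big_split /= [X in _ + X](big_setD1 x xVL) /= eqxx mul1n.
rewrite [X in _ + (_ + X)]big1 => [|y /setD1P[yx _]]; last by rewrite (negbTE yx).
by rewrite addn0 addnC [RHS](big_setID L) (setIidPr sLV).
Qed.

Definition covers V w H := {in V, forall z, 0 < w z -> z \in H}.

Lemma covers_setD V w L : \sum_(t in L) w t = 0 -> covers V w (V :\: L).
Proof.
move=> /eqP; rewrite sum_nat_eq0 => /forall_inP L0 z zV wz; rewrite inE zV andbT.
by apply: contraTN wz => /L0 /eqP ->.
Qed.

Definition rooted_split V r w H A :=
  [/\ connected_split e H A, H \subset V, covers V w H, r \in H & alternates_at e H A r] /\
  {in H, forall z, z != r -> #|side_comp e H A z| <= \sum_(y in V :\ r) w y}.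

Definition balanced_split V w H A :=
  [/\ connected_split e H A, H \subset V & covers V w H] /\
  {in H, forall z, #|side_comp e H A z| <= uphalf (\sum_(y in V) w y)}.

Lemma rooted_split_restrict V D r w H A : D \subset V -> covers V w D ->
  rooted_split D r w H A -> rooted_split V r w H A.
Proof.
move=> sDV covD [[hsplit sHD covH rH alt] bnd]; split; first split=> //.
- exact: subset_trans sHD sDV.
- by move=> z zV wz; apply: covH (covD z zV wz) wz.
move=> z zH zr; apply: leq_trans (bnd z zH zr) _.
exact/leq_sum_subset/setSD.
Qed.

Lemma balanced_split_restrict V D w H A : D \subset V -> covers V w D ->
  balanced_split D w H A -> balanced_split V w H A.
Proof.
move=> sDV covD [[hsplit sHD covH] bnd]; split; first split=> //.
- exact: subset_trans sHD sDV.
- by move=> z zV wz; apply: covH (covD z zV wz) wz.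
by move=> z zH; apply: leq_trans (bnd z zH) (uphalf_leq (leq_sum_subset _ sDV)).
Qed.

Lemma rooted_split_positive V r w : connected_on (induced e V) V -> r \in V ->
  {in V :\ r, forall y, 0 < w y} -> exists H A, rooted_split V r w H A.
Proof.
move=> cV rV wpos; have [A [sAV cA alt]] := exists_alternating_cross_connected esym eirr cV rV.
exists V, A; split; first by split.
move=> z zV zr; apply: (@leq_trans #|V :\ r|); last by rewrite -sum1_card; apply: leq_sum.
apply/subset_leq_card/subsetP => t tC; rewrite !inE.
rewrite (subsetP (side_sub z sAV) t (subsetP (comp_of_sub _ _ _) t tC)) andbT.
by apply: contraNneq (alternates_at_side_comp esym sAV alt zr) => <-.
Qed.

Lemma balanced_split_positive V w : connected_on (induced e V) V ->
  0 < \sum_(y in V) w y -> {in V, forall y, 0 < w y} -> exists H A, balanced_split V w H A.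
Proof.
move=> cV W0 wpos; have [r rV] : exists r, r \in V.
  by apply/set0Pn; apply: contraTneq W0 => ->; rewrite big_set0.
have [A [sAV cA bal]] := exists_balanced_cross_connected esym eirr cV rV.
exists V, A; split; first by split.
move=> z zV; apply: leq_trans (bal z zV) (uphalf_leq _).
by rewrite -sum1_card; apply: leq_sum.
Qed.

Section Contraction.
Variables (V : {set T}) (x z : T) (w : T -> nat).
Hypothesis xV : x \in V.
Let L := comp_of e (V :\ x) z.
Hypothesis wL : 0 < \sum_(t in L) w t.
Let w' := contract_weight w L x.

Let sLV : L \subset V :\ x := comp_of_setD1_sub e V x z.

Let xL : x \notin L.
Proof. by apply/negP => /(subsetP sLV); rewrite !inE eqxx. Qed.

Let sLV' : L \subset V := subset_trans sLV (subsetDl _ _).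

Let xVL : x \in V :\: L.
Proof. by rewrite inE xL. Qed.

Lemma sum_contract : \sum_(y in V :\: L) w' y = \sum_(y in V) w y.
Proof. exact: sum_contract_weight. Qed.

(* The rooted solution on x + L is first flipped, if needed, so that both solutions put x
   on the same side. *)
Lemma contract_glue H1 A1 H2 A2 :
  connected_split e H1 A1 -> H1 \subset V :\: L -> covers (V :\: L) w' H1 ->
  connected_split e H2 A2 -> H2 \subset x |: L -> x \in H2 -> covers (x |: L) w H2 ->
  alternates_at e H2 A2 x ->
  exists H A, [/\ connected_split e H A, H \subset V, covers V w H & H1 \subset H] /\
    [/\ {in H1, forall y, (y \in A) = (y \in A1)},
        {in H1, forall y, #|side_comp e H A y| <= #|side_comp e H1 A1 y|} &
        {in H :\: H1, forall y,
          [/\ y \in H2, y \in L & #|side_comp e H A y| <= #|side_comp e H2 A2 y|]}].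
Proof.
move=> [sA1 c1 cx1] sH1 cov1 split2 sH2 xH2 cov2 alt2.
have xH1 : x \in H1 by apply: cov1 xVL _; rewrite /w' /contract_weight eqxx mul1n ltn_addl.
have [A2' [[sA2' c2 cx2] alt2' agree side2']] : exists A2', [/\ connected_split e H2 A2',
    alternates_at e H2 A2' x, (x \in A1) = (x \in A2') &
    {in H2, forall y, side_comp e H2 A2' y = side_comp e H2 A2 y}].
  have [agree|disagree] := eqVneq (x \in A1) (x \in A2); first by exists A2.
  have [sA2 _ _] := split2.
  exists (H2 :\: A2); split.
  - exact: connected_split_setD.
  - exact: alternates_at_setD.
  - by rewrite !inE xH2 andbT; move: disagree; case: (x \in A1); case: (x \in A2).
  - by move=> y yH2; rewrite /side_comp side_setD.
have meet y : y \in H1 -> y \in H2 -> y = x.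
  move=> /(subsetP sH1) /setDP[_ yL] /(subsetP sH2).
  by rewrite in_setU1 (negbTE yL) orbF => /eqP.
have no_edge u v : u \in H1 -> v \in H2 -> u != x -> v != x -> ~~ e u v.
  move=> /(subsetP sH1) /setDP[uV uL] /(subsetP sH2) + ux vx; rewrite in_setU1 (negbTE vx) /=.
  by move=> vL; apply: contra uL => euv; exact: (comp_of_setD1_adj esym uV ux vL euv).
exists (H1 :|: H2), (A1 :|: A2'); split; split=> //.
- split; first exact: glue_sub sA1 sA2'.
    exact: glue_connected esym xH1 xH2 c1 c2.
  exact: glue_cross_connected esym sA1 sA2' xH1 xH2 meet agree cx1 cx2.
- apply/subsetP => t /setUP[/(subsetP sH1)/setDP[]//|/(subsetP sH2)].
  by rewrite in_setU1 => /orP[/eqP->//|/(subsetP sLV')].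
- move=> t tV wt; rewrite inE; have [tL|tL] := boolP (t \in L).
    by rewrite cov2 ?orbT // in_setU1 tL orbT.
  have tVL : t \in V :\: L by rewrite inE tL.
  by rewrite cov1 // /w' /contract_weight ltn_addr.
- exact: subsetUl.
- exact: glue_mem1 sA2' meet agree.
- by move=> y yH1; apply/subset_leq_card/(glue_side_comp1 sA1 sA2' xH1 meet no_edge agree alt2').
move=> y /setDP[yH yH1]; have yH2 : y \in H2 by case/setUP: yH => // /(negP yH1).
have yx : y != x by apply: contraNneq yH1 => ->.
split=> //; first by move: (subsetP sH2 y yH2); rewrite in_setU1 (negbTE yx).
rewrite -side2' //; apply/subset_leq_card.
exact: (glue_side_comp2 esym sA1 sA2' xH2 meet no_edge agree alt2' yH2 yx).
Qed.

Lemma rooted_split_contract r H1 A1 H2 A2 : r \in V :\: L -> r != x ->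
  rooted_split (V :\: L) r w' H1 A1 -> rooted_split (x |: L) x w H2 A2 ->
  exists H A, rooted_split V r w H A.
Proof.
move=> /setDP[rV rL] rx [[split1 sH1 cov1 rH1 alt1] bnd1] [[split2 sH2 cov2 xH2 alt2] bnd2].
have [H [A [[hsplit sHV cov sH1H] [mem1 le1 le2]]]] :=
  contract_glue split1 sH1 cov1 split2 sH2 xH2 cov2 alt2.
have sLVr : L \subset V :\ r.
  by apply/subsetP => t tL; rewrite !inE (subsetP sLV') ?andbT //; apply: contraNneq rL => <-.
exists H, A; split; first split=> //.
- exact: subsetP sH1H r rH1.
- move=> y yH ery; have [yH1|yH1] := boolP (y \in H1); first by rewrite !mem1 //; apply: alt1.
  have /le2[_ yL _] : y \in H :\: H1 by rewrite inE yH1.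
  by move: rL; rewrite (comp_of_setD1_adj esym rV rx yL ery).
move=> y yH yr; have [yH1|yH1] := boolP (y \in H1).
  apply: leq_trans (le1 y yH1) (leq_trans (bnd1 y yH1 yr) _).
  rewrite setDDl setUC -setDDl sum_contract_weight //.
  by rewrite in_setD xL !inE xV andbT eq_sym.
have /le2[yH2 yL le] : y \in H :\: H1 by rewrite inE yH1.
have yx : y != x by apply: contraNneq xL => <-.
by apply: leq_trans le (leq_trans (bnd2 y yH2 yx) _); rewrite setU1K // leq_sum_subset.
Qed.

Lemma balanced_split_contract H1 A1 H2 A2 : (\sum_(t in L) w t).*2 <= \sum_(y in V) w y ->
  balanced_split (V :\: L) w' H1 A1 -> rooted_split (x |: L) x w H2 A2 ->
  exists H A, balanced_split V w H A.
Proof.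
move=> light [[split1 sH1 cov1] bnd1] [[split2 sH2 cov2 xH2 alt2] bnd2].
have [H [A [[hsplit sHV cov _] [_ le1 le2]]]] :=
  contract_glue split1 sH1 cov1 split2 sH2 xH2 cov2 alt2.
exists H, A; split; first by split.
move=> y yH; have [yH1|yH1] := boolP (y \in H1).
  by rewrite -sum_contract; apply: leq_trans (le1 y yH1) (bnd1 y yH1).
have /le2[yH2 yL le] : y \in H :\: H1 by rewrite inE yH1.
have yx : y != x by apply: contraNneq xL => <-.
apply: leq_trans le (leq_trans (bnd2 y yH2 yx) _).
by rewrite setU1K // geq_uphalf_double (leq_trans light).
Qed.

End Contraction.

End WeightedSplits.

Section WeightedInduction.
Variables (T : finType) (e : rel T).
Hypotheses (esym : symmetric e) (eirr : irreflexive e).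
Implicit Types (V : {set T}) (w : T -> nat) (r x y z : T).

Lemma light_component V x z1 z2 w : z1 \in V :\ x ->
  ~~ connect (induced e (V :\ x)) z1 z2 -> z2 \in V :\ x ->
  exists2 z, z \in V :\ x & (\sum_(t in comp_of e (V :\ x) z) w t).*2 <= \sum_(t in V) w t.
Proof.
move=> z1Vx nz12 z2Vx; set L1 := comp_of e (V :\ x) z1; set L2 := comp_of e (V :\ x) z2.
have sL1V : L1 \subset V := subset_trans (comp_of_sub _ _ _) (subsetDl _ _).
have sL2 : L2 \subset V :\: L1.
  apply/subsetP => t /[dup] /setIdP[/setD1P[_ tV] c2t] tL2; rewrite inE tV andbT.
  apply/negP => /setIdP[_ c1t]; move/negP: nz12; apply; apply: connect_trans c1t _.
  by rewrite connect_induced_sym.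
have le2 := leq_sum_subset w sL2.
have sumV : \sum_(t in V) w t = \sum_(t in L1) w t + \sum_(t in V :\: L1) w t.
  by rewrite (big_setID L1) (setIidPr sL1V).
have [light1|heavy1] := leqP (\sum_(t in L1) w t).*2 (\sum_(t in V) w t); first by exists z1.
by exists z2; rewrite // -/L2; move: le2 heavy1; rewrite sumV; lia.
Qed.

Lemma exists_rooted_split V r w : connected_on (induced e V) V -> r \in V ->
  exists H A, rooted_split e V r w H A.
Proof.
have [n] := ubnP #|V|; elim: n V r w => // n IH V r w /ltnSE leVn cV rV.
have IHV (D : {set T}) r' w' : #|D| < #|V| -> connected_on (induced e D) D -> r' \in D ->
    exists H A, rooted_split e D r' w' H A.
  by move=> ltD; apply: IH; apply: leq_trans ltD leVn.
have [/exists_inP[y /setD1P[yr yV] /andP[/eqP wy /connectedP cVy]]|noA] :=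
  boolP [exists y in V :\ r, (w y == 0) && connectedb (induced e (V :\ y)) (V :\ y)].
  have ltVy : #|V :\ y| < #|V| by apply: card_lt_witness (subsetDl _ _) yV _; rewrite setD11.
  have rVy : r \in V :\ y by rewrite !inE eq_sym yr.
  have [H [A sol]] := IHV _ r w ltVy cVy rVy.
  exists H, A; apply: rooted_split_restrict sol; first exact: subsetDl.
  by apply: covers_setD; rewrite big_set1.
have [/exists_inP[x /setD1P[xr xV] /exists_inP[z zVx nzr]]|noB] :=
  boolP [exists x in V :\ r, [exists z in V :\ x, ~~ connect (induced e (V :\ x)) z r]].
  set L := comp_of e (V :\ x) z.
  have rL : r \notin L by rewrite inE negb_and nzr orbT.
  have rVL : r \in V :\: L by rewrite inE rL rV.
  have ltVL : #|V :\: L| < #|V|.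
    by apply: card_lt_witness (subsetDl _ _) (setD1P zVx).2 _; rewrite inE comp_of_id.
  have cVL := connected_setD_comp (z := z) esym cV xV.
  have [wL0|wL] := posnP (\sum_(t in L) w t).
    have [H [A sol]] := IHV _ r w ltVL cVL rVL.
    by exists H, A; apply: rooted_split_restrict sol; [exact: subsetDl | exact: covers_setD].
  have [H1 [A1 sol1]] := IHV _ r (contract_weight w L x) ltVL cVL rVL.
  have ltxL : #|x |: L| < #|V|.
    apply: card_lt_witness _ rV _; last by rewrite in_setU1 negb_or eq_sym xr.
    by rewrite subUset sub1set xV (subset_trans (comp_of_sub _ _ _) (subsetDl _ _)).
  have [H2 [A2 sol2]] := IHV _ x w ltxL (connected_setU1_comp esym cV xV zVx) (setU11 x L).
  have rx : r != x by rewrite eq_sym.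
  exact: (rooted_split_contract esym xV wL rVL rx sol1 sol2).
move/exists_inPn: noA => noA; move/exists_inPn: noB => noB.
apply: (rooted_split_positive esym eirr cV rV) => y yVr; rewrite lt0n; apply: contra (noA y yVr) => wy0.
rewrite wy0; apply/connectedP/(connected_on_from (x := r) (connect_induced_sym esym _)).
move=> a aVy; rewrite connect_induced_sym //; apply: negbNE.
by move/exists_inPn: (noB y yVr); apply.
Qed.

Lemma exists_balanced_split V w : connected_on (induced e V) V -> 0 < \sum_(y in V) w y ->
  exists H A, balanced_split e V w H A.
Proof.
have [n] := ubnP #|V|; elim: n V w => // n IH V w /ltnSE leVn cV W0.
have IHV (D : {set T}) w' : #|D| < #|V| -> connected_on (induced e D) D -> 0 < \sum_(y in D) w' y ->
    exists H A, balanced_split e D w' H A.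
  by move=> ltD; apply: IH; apply: leq_trans ltD leVn.
have [/exists_inP[y yV /andP[/eqP wy /connectedP cVy]]|noA] :=
  boolP [exists y in V, (w y == 0) && connectedb (induced e (V :\ y)) (V :\ y)].
  have ltVy : #|V :\ y| < #|V| by apply: card_lt_witness (subsetDl _ _) yV _; rewrite setD11.
  have W0y : 0 < \sum_(t in V :\ y) w t by rewrite (big_setD1 y yV) wy in W0.
  have [H [A sol]] := IHV _ w ltVy cVy W0y.
  exists H, A; apply: balanced_split_restrict sol; first exact: subsetDl.
  by apply: covers_setD; rewrite big_set1.
have [/exists_inP[x xV /exists_inP[z1 z1Vx /exists_inP[z2 z2Vx nz12]]]|noB] :=
  boolP [exists x in V, [exists z in V :\ x,
         [exists z' in V :\ x, ~~ connect (induced e (V :\ x)) z z']]].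
  have [z zVx light] := light_component w z1Vx nz12 z2Vx.
  set L := comp_of e (V :\ x) z in light *.
  have sLV : L \subset V := subset_trans (comp_of_sub _ _ _) (subsetDl _ _).
  have xVL : x \in V :\: L by rewrite inE xV andbT; apply/negP => /setIdP[/setD1P[]]; rewrite eqxx.
  have ltVL : #|V :\: L| < #|V|.
    by apply: card_lt_witness (subsetDl _ _) (setD1P zVx).2 _; rewrite inE comp_of_id.
  have cVL := connected_setD_comp (z := z) esym cV xV.
  have [wL0|wL] := posnP (\sum_(t in L) w t).
    have W0L : 0 < \sum_(t in V :\: L) w t.
      by move: W0; rewrite (big_setID L) (setIidPr sLV) wL0.
    have [H [A sol]] := IHV _ w ltVL cVL W0L.
    by exists H, A; apply: balanced_split_restrict sol; [exact: subsetDl | exact: covers_setD].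
  have W0L : 0 < \sum_(t in V :\: L) contract_weight w L x t by rewrite sum_contract_weight.
  have [H1 [A1 sol1]] := IHV _ (contract_weight w L x) ltVL cVL W0L.
  have [H2 [A2 sol2]] := exists_rooted_split w (connected_setU1_comp esym cV xV zVx) (setU11 x L).
  exact: (balanced_split_contract esym xV wL light sol1 sol2).
move/exists_inPn: noA => noA; move/exists_inPn: noB => noB.
apply: (balanced_split_positive esym eirr cV W0) => y yV; rewrite lt0n; apply: contra (noA y yV) => wy0.
rewrite wy0; apply/connectedP => a b aVy bVy; apply: negbNE.
by move/exists_inPn: (noB y yV) => /(_ a aVy) /exists_inPn; apply.
Qed.

End WeightedInduction.

Section Closure.
Variables (T : finType) (e : rel T) (S : {set T}) (m : nat).
Hypotheses (esym : symmetric e) (m_gt0 : 0 < m).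
Implicit Types (H A : {set T}) (u v : T).

Definition small_split H A :=
  [/\ connected_split e H A, S \subset H & {in H, forall z, #|side_comp e H A z| <= m}].

Definition attach_closed H A := forall v, v \notin H -> (exists2 u, u \in H & e v u) ->
  (exists2 a, a \in A & e v a) /\ (exists2 b, b \in H :\: A & e v b).

Lemma small_split_setD H A : small_split H A -> small_split H (H :\: A).
Proof.
case=> [[sAH cH cA] sSH bnd]; split=> //; first exact: connected_split_setD.
by move=> z zH; rewrite /side_comp side_setD //; apply: bnd.
Qed.

Lemma connected_setU1 H v u : connected_on (induced e H) H -> u \in H -> e v u ->
  connected_on (induced e (v |: H)) (v |: H).
Proof.
move=> cH uH evu; apply: (connected_on_from (x := u) (connect_induced_sym esym _)) => y.
case/setU1P=> [->|yH].
  by apply: connect1; rewrite /induced /= !in_setU1 eqxx uH orbT esym evu.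
exact: (connect_induced_sub (subsetUr _ _) (fun _ _ h => h) (cH _ _ uH yH)).
Qed.

(* A vertex with no neighbour in A joins A as a singleton component. *)
Lemma small_split_add H A v u : small_split H A -> v \notin H -> u \in H -> e v u ->
  {in A, forall a, ~~ e v a} -> small_split (v |: H) (v |: A).
Proof.
case=> [[sAH cH cA] sSH bnd] vH uH evu noA.
have uA : u \notin A by apply: contraL evu; apply: noA.
have BE : (v |: H) :\: (v |: A) = H :\: A.
  by apply/setP => t; rewrite !inE; case: eqVneq => // ->; rewrite (negbTE vH) andbF.
split; first split.
- exact: setUS.
- exact: connected_setU1 cH uH evu.
- rewrite /cross_connected BE; apply: (connected_on_from (x := u) (connect_cross_sym esym _ _)).
  have sub : subrel (cross e A (H :\: A)) (connect (cross e (v |: A) (H :\: A))).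
    move=> x y /andP[exy h]; apply: connect1; rewrite /cross /= exy !in_setU1.
    by case/orP: h => /andP[-> ->]; rewrite ?orbT.
  move=> y /setU1P[->|yH]; last exact: (connect_sub sub (cA _ _ uH yH)).
  by apply: connect1; rewrite /cross /= esym evu !inE eqxx uA uH orbT.
- exact: subset_trans sSH (subsetUr _ _).
move=> z /setU1P[->|zH].
  rewrite /side_comp /side setU11; apply: leq_trans (_ : #|[set v]| <= m); last by rewrite cards1.
  apply/subset_leq_card/subsetP => t /setIdP[tA cvt]; rewrite inE; apply/negPn/negP => tv.
  have tn : t \notin [set v] by rewrite inE.
  have [q [q' [/set1P -> q'v /and3P[_ q'A evq']]]] := connect_exit cvt (set11 v) tn.
  rewrite inE in q'v; move: q'A; rewrite in_setU1 (negbTE q'v) /= => /noA.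
  by rewrite evq'.
have zv : z != v by apply: contraNneq vH => <-.
apply: leq_trans (bnd z zH); apply/subset_leq_card; rewrite /side_comp /side in_setU1 (negbTE zv) /=.
case: ifP => zA; last by rewrite BE.
apply: (comp_of_closed zA) => [a t aA _|//]; rewrite in_setU1 => /orP[/eqP->|//].
by rewrite esym => eva; move: (noA a aA); rewrite eva.
Qed.

Lemma exists_attach_closed H A : small_split H A ->
  exists H' A', small_split H' A' /\ attach_closed H' A'.
Proof.
have [n] := ubnP #|~: H|; elim: n H A => // n IH H A /ltnSE leHn split.
have IHH v B : v \notin H -> small_split (v |: H) B ->
    exists H' A', small_split H' A' /\ attach_closed H' A'.
  move=> vH; apply: IH; apply: leq_trans leHn; rewrite setCU -setIC -setDE.
  have vC : v \in ~: H by rewrite inE.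
  by apply: (card_lt_witness (subsetDl _ _) vC); rewrite setD11.
have [/existsP[v /and3P[vH /existsP[u /andP[uH evu]] bad]]|closed] := boolP [exists v,
    [&& v \notin H, [exists u, (u \in H) && e v u] &
     ~~ ([exists a in A, e v a] && [exists b in H :\: A, e v b])]].
  have [noA|noB] := nandP bad.
    apply: (IHH v (v |: A) vH); apply: small_split_add split vH uH evu _.
    by move=> a aA; apply: contra noA => eva; apply/exists_inP; exists a.
  apply: (IHH v (v |: (H :\: A)) vH); apply: small_split_add (small_split_setD split) vH uH evu _.
  by move=> b bB; apply: contra noB => evb; apply/exists_inP; exists b.
exists H, A; split=> // v vH [u uH evu].
move/existsPn: closed => /(_ v); rewrite vH /=.
have -> /= : [exists u, (u \in H) && e v u] by apply/existsP; exists u; rewrite uH.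
by rewrite negbK => /andP[/exists_inP[a aA eva] /exists_inP[b bB evb]]; split; [exists a | exists b].
Qed.

End Closure.

Theorem lemma2 (T : finType) (e : rel T) (S : {set T}) (k : nat) :
  simple_graph e -> graph_connected e ->
  #|S| = k -> 1 <= k ->
  exists H A B : {set T},
    [/\ S \subset H, connected_on (induced e H) H,
        H = A :|: B & [disjoint A & B]] /\
    [/\ (forall a, a \in A -> #|comp_of e A a| <= uphalf k),
        (forall b, b \in B -> #|comp_of e B b| <= uphalf k),
        connected_on (cross e A B) H &
        forall v, v \notin H -> (exists2 u, u \in H & e v u) ->
          (exists2 a, a \in A & e v a) /\ (exists2 b, b \in B & e v b)].
Proof.
move=> [esym eirr] cG cardS k_gt0.
pose w (y : T) : nat := y \in S.
have sumw : \sum_(y in [set: T]) w y = k.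
  rewrite -cardS -sum1_card [RHS]big_mkcond [LHS]big_mkcond /=.
  by apply: eq_bigr => y _; rewrite inE /w; case: (y \in S).
have cT : connected_on (induced e [set: T]) [set: T].
  move=> x y xT yT; apply: connect_sub (cG x y xT yT) => a b eab.
  by apply: connect1; rewrite /induced /= !inE.
have W0 : 0 < \sum_(y in [set: T]) w y by rewrite sumw.
have [H0 [A0 [[split0 _ cov0] bnd0]]] := exists_balanced_split esym eirr cT W0.
have small0 : small_split e S (uphalf k) H0 A0.
  split=> //; last by rewrite -sumw.
  by apply/subsetP => y yS; apply: cov0; rewrite ?inE /w ?yS.
have m0 : 0 < uphalf k by rewrite uphalf_gt0.
have [H [A [[[sAH cH cA] sSH bnd] closed]]] := exists_attach_closed esym m0 small0.
exists H, A, (H :\: A); split; split=> //.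
- by apply/setP => t; rewrite !inE; case tA: (t \in A); rewrite ?(subsetP sAH t tA).
- by rewrite disjoints_subset; apply/subsetP => t tA; rewrite !inE tA.
- by move=> a aA; have := bnd a (subsetP sAH a aA); rewrite /side_comp /side aA.
by move=> b /[dup] /setDP[bH /negbTE bA] bB; have := bnd b bH; rewrite /side_comp /side bA.
Qed.
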